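(* Let $\mathcal{E}'$ be any function mapping a pair consisting of an $\mathcal{ALC}$-formula and an interpretation to an $\mathcal{ALC}$-formula. Then $\mathcal{E}'(\varphi,M)\equiv\mathcal{E}(\varphi,M)$ for every $\mathcal{ALC}$-formula $\varphi$ and every interpretation $M$ (with $\mathcal{E}$ the finite base model expansion defined in the context) if and only if $\mathcal{E}'$ satisfies, for every $\varphi$ and $M$: (success) $M\in\mathrm{Mod}(\mathcal{E}'(\varphi,M))$; (persistence) $\mathrm{Mod}(\varphi)\subseteq\mathrm{Mod}(\mathcal{E}'(\varphi,M))$; (atomic temperance) for every set $\mathbb{M}'$ of interpretations, if $\mathrm{Mod}(\varphi)\cup[M]_\varphi\subseteq\mathbb{M}'\subsetneq\mathrm{Mod}(\mathcal{E}'(\varphi,M))\cup\{M\}$, then $\mathbb{M}'$ is not finitely representable in $\mathcal{ALC}$-formula; (atomic extensionality) for every interpretation $M'$, if $M'\equiv_\varphi M$ then $\mathrm{Mod}(\mathcal{E}'(\varphi,M))=\mathrm{Mod}(\mathcal{E}'(\varphi,M'))$.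
   Context: Syntax: $N_C,N_R,N_I$ are pairwise disjoint countably infinite sets of concept, role and individual names. $\mathcal{ALC}$ concepts: $C::=A\mid \neg C\mid (C\sqcap C)\mid \exists r.C$; $\top,\sqcup$ usual abbreviations. $\mathcal{ALC}$-formulae: $\phi::=\alpha\mid\neg\phi\mid(\phi\wedge\phi)$ with atomic $\alpha::=C(a)\mid r(a,b)\mid(C=\top)$; $\vee$ is the usual abbreviation; $\neg\neg\psi$ is identified with $\psi$. A literal is an atomic formula or its negation. Interpretations $I=(\Delta^I,\cdot^I)$ (countable nonempty domain, interpreting concept, role and individual names) with the standard semantics; $I\models C(a)$ iff $a^I\in C^I$, $I\models r(a,b)$ iff $(a^I,b^I)\in r^I$, $I\models(C=\top)$ iff $C^I=\Delta^I$, $\neg,\wedge$ classical. $\mathrm{Mod}(\varphi)$ is the set of interpretations satisfying $\varphi$; $\varphi\equiv\psi$ iff $\mathrm{Mod}(\varphi)=\mathrm{Mod}(\psi)$. A set of interpretations is finitely representable in $\mathcal{ALC}$-formula if it equals $\mathrm{Mod}$ of a finite set of $\mathcal{ALC}$-formulae. $\mathrm{Sub}(\alpha)=\mathrm{Sub}(\neg\alpha)=\{\alpha,\neg\alpha\}$ for atomic $\alpha$; $\mathrm{Sub}(\psi\wedge\psi')=\mathrm{Sub}(\neg(\psi\wedge\psi'))=\{\psi\wedge\psi',\neg(\psi\wedge\psi')\}\cup\mathrm{Sub}(\psi)\cup\mathrm{Sub}(\psi')$. $\mathrm{con}(\varphi)$ is the smallest concept set containing $C$ whenever $(C=\top)$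 or $C(a)$ is in $\mathrm{Sub}(\varphi)$, closed under taking conjuncts of $C\sqcap D$, under $\exists r.C\mapsto C$, and under single negation. For an interpretation $I$, $\mathrm{qm}(\varphi,I)=(T,o,f)$ where $T=\{c(x)\mid x\in\Delta^I\}$, $c(x)=\{C\in\mathrm{con}(\varphi)\mid x\in C^I\}$, $o(a)=c(a^I)$ for individuals $a$ of $\varphi$, and $f=\{\psi\in\mathrm{Sub}(\varphi)\mid I\models\psi\}$; $\mathrm{lit}(f)$ is the set of literals in $f$. The finite base model expansion is $\mathcal{E}(\varphi,M)=\varphi$ if $M\models\varphi$, and $\mathcal{E}(\varphi,M)=\varphi\vee\bigwedge\mathrm{lit}(f)$ otherwise, where $\mathrm{qm}(\neg\varphi,M)=(T,o,f)$. $\mathcal{L}_{lit}(\varphi)$ is the set of Boolean combinations of atomic formulae occurring in $\varphi$; $M\equiv_\varphi M'$ iff $M$ and $M'$ satisfy the same formulae of $\mathcal{L}_{lit}(\varphi)$; $[M]_\varphi=\{M'\mid M'\equiv_\varphi M\}$. *)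

From Stdlib Require Import List ClassicalEpsilon.
Import ListNotations.

(* Concept, role and individual names: three separate copies of nat
   (pairwise disjoint, countably infinite). *)
Definition cname := nat.
Definition rname := nat.
Definition iname := nat.

Inductive concept : Type :=
| CName : cname -> concept
| CNeg  : concept -> concept
| CAnd  : concept -> concept -> concept
| CEx   : rname -> concept -> concept.

Definition CTop : concept := CNeg (CAnd (CName 0) (CNeg (CName 0))).

Definition cneg (C : concept) : concept :=
  match C with CNeg D => D | _ => CNeg C end.

Inductive atom : Type :=
| ACAss : concept -> iname -> atom
| ARAss : rname -> iname -> iname -> atom
| ATBox : concept -> atom.                    (* C = T *)

Inductive formula : Type :=
| FAtom : atom -> formula
| FNeg  : formula -> formula
| FAnd  : formula -> formula -> formula.

Definition fneg (p : formula) : formula :=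
  match p with FNeg q => q | _ => FNeg p end.

Definition FOr (p q : formula) : formula := fneg (FAnd (fneg p) (fneg q)).

Record Interp : Type := {
  dom : Type;
  dom_inh : dom;
  dom_countable : exists f : dom -> nat, forall x y, f x = f y -> x = y;
  cI : cname -> dom -> Prop;
  rI : rname -> dom -> dom -> Prop;
  iI : iname -> dom
}.

Fixpoint cinterp (I : Interp) (C : concept) : dom I -> Prop :=
  match C with
  | CName A => cI I A
  | CNeg D => fun x => ~ cinterp I D x
  | CAnd D E => fun x => cinterp I D x /\ cinterp I E x
  | CEx r D => fun x => exists y, rI I r x y /\ cinterp I D y
  end.

Definition asat (I : Interp) (a : atom) : Prop :=
  match a with
  | ACAss C i => cinterp I C (iI I i)
  | ARAss r i j => rI I r (iI I i) (iI I j)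
  | ATBox C => forall x, cinterp I C x
  end.

Fixpoint sat (I : Interp) (p : formula) : Prop :=
  match p with
  | FAtom a => asat I a
  | FNeg q => ~ sat I q
  | FAnd q r => sat I q /\ sat I r
  end.

Definition iset := Interp -> Prop.

Definition Mod (p : formula) : iset := fun I => sat I p.

Definition equiv (p q : formula) : Prop := forall I, Mod p I <-> Mod q I.

Definition iset_eq (S T : iset) : Prop := forall I, S I <-> T I.
Definition iset_sub (S T : iset) : Prop := forall I, S I -> T I.
Definition iset_ssub (S T : iset) : Prop := iset_sub S T /\ exists I, T I /\ ~ S I.
Definition iset_union (S T : iset) : iset := fun I => S I \/ T I.
Definition iset_single (M : Interp) : iset := fun I => I = M.

Definition ModL (G : list formula) : iset := fun I => forall p, In p G -> sat I p.

Definition fin_rep (S : iset) : Prop := exists G : list formula, iset_eq S (ModL G).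

(* Sub(phi), as a list; Sub(~psi) = Sub(psi) (with ~~psi identified with psi) *)
Fixpoint Sub (p : formula) : list formula :=
  match p with
  | FAtom a => [FAtom a; FNeg (FAtom a)]
  | FNeg q => Sub q
  | FAnd q r => FAnd q r :: FNeg (FAnd q r) :: Sub q ++ Sub r
  end.

Inductive con (p : formula) : concept -> Prop :=
| con_tbox : forall C, In (FAtom (ATBox C)) (Sub p) -> con p C
| con_cass : forall C a, In (FAtom (ACAss C a)) (Sub p) -> con p C
| con_andl : forall C D, con p (CAnd C D) -> con p C
| con_andr : forall C D, con p (CAnd C D) -> con p D
| con_ex   : forall r C, con p (CEx r C) -> con p C
| con_neg  : forall C, con p C -> con p (cneg C).

Definition decP (P : Prop) : bool :=
  if excluded_middle_informative P then true else false.

Definition qm_c (p : formula) (I : Interp) (x : dom I) : concept -> Prop :=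
  fun C => con p C /\ cinterp I C x.

Record qmodel : Type := {
  qm_T : (concept -> Prop) -> Prop;
  qm_o : iname -> (concept -> Prop);
  qm_f : list formula
}.

Fixpoint atoms_of (p : formula) : list atom :=
  match p with
  | FAtom a => [a]
  | FNeg q => atoms_of q
  | FAnd q r => atoms_of q ++ atoms_of r
  end.

Definition qm (p : formula) (I : Interp) : qmodel := {|
  qm_T := fun S => exists x : dom I, S = qm_c p I x;
  (* o(a) = c(a^I); only its values on individuals of p are relevant *)
  qm_o := fun a => qm_c p I (iI I a);
  qm_f := filter (fun q => decP (sat I q)) (Sub p)
|}.

Definition is_literal (p : formula) : bool :=
  match p with
  | FAtom _ => true
  | FNeg (FAtom _) => true
  | _ => false
  end.

Definition lit (f : list formula) : list formula := filter is_literal f.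

(* finite conjunction (the lists used are nonempty; [] gives T = T) *)
Fixpoint bigAnd (l : list formula) : formula :=
  match l with
  | [] => FAtom (ATBox CTop)
  | [p] => p
  | p :: l' => FAnd p (bigAnd l')
  end.

Definition Efbm (p : formula) (M : Interp) : formula :=
  if decP (sat M p) then p
  else FOr p (bigAnd (lit (qm_f (qm (fneg p) M)))).

Definition in_Llit (p q : formula) : Prop :=
  forall a, In a (atoms_of q) -> In a (atoms_of p).

Definition lit_equiv (p : formula) (M M' : Interp) : Prop :=
  forall q, in_Llit p q -> (sat M q <-> sat M' q).

Definition lit_class (p : formula) (M : Interp) : iset := fun M' => lit_equiv p M' M.

From Stdlib Require Import List ClassicalEpsilon Classical.
Import ListNotations.

(* The conjunction of the literals of Sub(~phi) true in M axiomatizes [M]_phi,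
   so Mod (E(phi, M)) = Mod phi U [M]_phi, and it suffices to show that the four
   postulates characterize this set.  Success, persistence and atomic
   extensionality give the inclusion of Mod phi U [M]_phi in Mod (E'(phi, M));
   as Mod phi U [M]_phi is finitely represented (by E(phi, M) itself), atomic
   temperance forbids it from being strictly smaller than Mod (E'(phi, M)) U {M},
   which gives the converse inclusion. *)

Lemma decP_true (P : Prop) : decP P = true <-> P.
Proof.
  unfold decP; destruct (excluded_middle_informative P); split; congruence || tauto.
Qed.

Lemma sat_fneg I p : sat I (fneg p) <-> ~ sat I p.
Proof. destruct p; simpl; tauto. Qed.

Lemma sat_FOr I p q : sat I (FOr p q) <-> sat I p \/ sat I q.
Proof.
  unfold FOr; rewrite sat_fneg; simpl; rewrite !sat_fneg; tauto.
Qed.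

Lemma sat_bigAnd I l : sat I (bigAnd l) <-> forall q, In q l -> sat I q.
Proof.
  induction l as [|p [|p' l] IH]; simpl.
  - split; [intros _ q [] | intros _ x; simpl; tauto].
  - split; [intros H q [<- | []]; exact H | intros H; apply H; left; reflexivity].
  - change (sat I p /\ sat I (bigAnd (p' :: l)) <->
            forall q, p = q \/ In q (p' :: l) -> sat I q).
    rewrite IH; split; [intros [Hp Hl] q [<- | Hq]; auto | intros H; split; auto].
Qed.

Lemma sat_agree_on_atoms I J q :
  (forall a, In a (atoms_of q) -> (asat I a <-> asat J a)) -> (sat I q <-> sat J q).
Proof.
  induction q as [a | q IH | q1 IH1 q2 IH2]; simpl; intro H.
  - apply H; left; reflexivity.
  - rewrite IH; tauto.
  - rewrite IH1, IH2; [tauto | |]; intros a Ha; apply H, in_or_app; auto.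
Qed.

Lemma Sub_fneg p : Sub (fneg p) = Sub p.
Proof. destruct p; reflexivity. Qed.

Lemma atoms_of_Sub p q : In q (Sub p) -> incl (atoms_of q) (atoms_of p).
Proof.
  induction p as [a | p IH | p1 IH1 p2 IH2]; simpl; intro Hq.
  - destruct Hq as [<- | [<- | []]]; apply incl_refl.
  - exact (IH Hq).
  - destruct Hq as [<- | [<- | Hq]]; try apply incl_refl.
    apply in_app_or in Hq as [Hq | Hq].
    + exact (incl_appl _ (IH1 Hq)).
    + exact (incl_appr _ (IH2 Hq)).
Qed.

Lemma literals_in_Sub p a :
  In a (atoms_of p) -> In (FAtom a) (Sub p) /\ In (FNeg (FAtom a)) (Sub p).
Proof.
  induction p as [b | p IH | p1 IH1 p2 IH2]; simpl; intro Ha.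
  - destruct Ha as [<- | []]; auto.
  - exact (IH Ha).
  - apply in_app_or in Ha as [Ha | Ha];
      [destruct (IH1 Ha) | destruct (IH2 Ha)];
      split; right; right; apply in_or_app; auto.
Qed.

Lemma lit_equiv_refl p M : lit_equiv p M M.
Proof. intros q _; reflexivity. Qed.

Lemma lit_class_eq p M M' :
  lit_equiv p M' M -> iset_eq (lit_class p M) (lit_class p M').
Proof.
  intros HM' J; split; intros HJ q Hq;
    specialize (HJ q Hq); specialize (HM' q Hq); tauto.
Qed.

Lemma In_lit_qm_f p M q :
  In q (lit (qm_f (qm p M))) <-> In q (Sub p) /\ sat M q /\ is_literal q = true.
Proof.
  unfold lit; simpl; rewrite filter_In, filter_In, decP_true; tauto.
Qed.

Lemma sat_lit_diagram p M I :
  sat I (bigAnd (lit (qm_f (qm (fneg p) M)))) <-> lit_equiv p I M.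
Proof.
  rewrite sat_bigAnd; split.
  - intros Hlits q Hq; apply sat_agree_on_atoms; intros a Ha.
    destruct (literals_in_Sub p a (Hq a Ha)) as [Hpos Hneg].
    destruct (classic (asat M a)) as [Ma | Ma].
    + enough (asat I a) by tauto.
      apply (Hlits (FAtom a)), In_lit_qm_f; rewrite Sub_fneg; auto.
    + enough (~ asat I a) by tauto.
      apply (Hlits (FNeg (FAtom a))), In_lit_qm_f; rewrite Sub_fneg; auto.
  - intros HIM q Hq; apply In_lit_qm_f in Hq as [HSub [HMq _]].
    rewrite Sub_fneg in HSub.
    apply (HIM q); [exact (atoms_of_Sub p q HSub) | exact HMq].
Qed.

Lemma Mod_Efbm p M : iset_eq (Mod (Efbm p M)) (iset_union (Mod p) (lit_class p M)).
Proof.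
  intro I; unfold Mod, iset_union, lit_class, Efbm.
  destruct (decP (sat M p)) eqn:HMp.
  - rewrite decP_true in HMp.
    split; [tauto | intros [Hp | HIM]; [exact Hp |]].
    apply (HIM p); [apply incl_refl | exact HMp].
  - rewrite sat_FOr, sat_lit_diagram; reflexivity.
Qed.

Lemma equiv_Efbm p M E :
  equiv E (Efbm p M) <-> iset_eq (Mod E) (iset_union (Mod p) (lit_class p M)).
Proof.
  split; intros H I; rewrite (H I); [apply Mod_Efbm | symmetry; apply Mod_Efbm].
Qed.

Lemma fin_rep_Mod_lit_class p M : fin_rep (iset_union (Mod p) (lit_class p M)).
Proof.
  exists [Efbm p M]; intro J; rewrite <- (Mod_Efbm p M J).
  unfold ModL, Mod; simpl.
  split; [intros H q [<- | []]; exact H | intros H; apply H; left; reflexivity].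
Qed.

Lemma iset_sub_of_not_ssub S T : iset_sub S T -> ~ iset_ssub S T -> iset_sub T S.
Proof.
  intros HST Hnot I HI; apply NNPP; intro HnI.
  apply Hnot; split; [exact HST | exists I; auto].
Qed.

Section Postulates.

Variable E' : formula -> Interp -> formula.

Definition success phi M : Prop := Mod (E' phi M) M.

Definition persistence phi M : Prop := iset_sub (Mod phi) (Mod (E' phi M)).

Definition atomic_temperance phi M : Prop :=
  forall M' : iset,
    iset_sub (iset_union (Mod phi) (lit_class phi M)) M' ->
    iset_ssub M' (iset_union (Mod (E' phi M)) (iset_single M)) ->
    ~ fin_rep M'.

Definition atomic_extensionality phi M : Prop :=
  forall M' : Interp, lit_equiv phi M' M ->
    iset_eq (Mod (E' phi M)) (Mod (E' phi M')).

Definition expansion_postulates phi M : Prop :=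
  success phi M /\ persistence phi M /\
  atomic_temperance phi M /\ atomic_extensionality phi M.

Lemma postulates_of_Mod_eq :
  (forall phi M, iset_eq (Mod (E' phi M)) (iset_union (Mod phi) (lit_class phi M))) ->
  forall phi M, expansion_postulates phi M.
Proof.
  intros HE phi M; split; [| split; [| split]].
  - apply HE; right; apply lit_equiv_refl.
  - intros I HI; apply HE; left; exact HI.
  - intros S Hsub [_ [I [HI HnI]]] _; apply HnI, Hsub.
    destruct HI as [HI | ->]; [apply HE, HI | right; apply lit_equiv_refl].
  - intros M' HM' I; rewrite (HE phi M I), (HE phi M' I).
    pose proof (lit_class_eq phi M M' HM' I); unfold iset_union; tauto.
Qed.

Lemma Mod_eq_of_postulates :
  (forall phi M, expansion_postulates phi M) ->
  forall phi M, iset_eq (Mod (E' phi M)) (iset_union (Mod phi) (lit_class phi M)).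
Proof.
  intros Hpost phi M.
  destruct (Hpost phi M) as (_ & Hpers & Htemp & Hext).
  assert (Hclass : iset_sub (iset_union (Mod phi) (lit_class phi M)) (Mod (E' phi M))).
  { intros J [HJ | HJ]; [exact (Hpers J HJ) |].
    apply (Hext J HJ), (proj1 (Hpost phi J)). }
  assert (Hmax : iset_sub (iset_union (Mod (E' phi M)) (iset_single M))
                          (iset_union (Mod phi) (lit_class phi M))).
  { apply iset_sub_of_not_ssub.
    - intros J HJ; left; exact (Hclass J HJ).
    - intro Hss; exact (Htemp _ (fun J HJ => HJ) Hss (fin_rep_Mod_lit_class phi M)). }
  intro I; split; [intro HI; apply Hmax; left; exact HI | apply Hclass].
Qed.

End Postulates.

Theorem mainTheorem2 (E' : formula -> Interp -> formula) :
  (forall (phi : formula) (M : Interp), equiv (E' phi M) (Efbm phi M))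
  <->
  (forall (phi : formula) (M : Interp),
     (* success *)
     Mod (E' phi M) M /\
     (* persistence *)
     iset_sub (Mod phi) (Mod (E' phi M)) /\
     (* atomic temperance *)
     (forall M' : iset,
        iset_sub (iset_union (Mod phi) (lit_class phi M)) M' ->
        iset_ssub M' (iset_union (Mod (E' phi M)) (iset_single M)) ->
        ~ fin_rep M') /\
     (* atomic extensionality *)
     (forall M' : Interp, lit_equiv phi M' M ->
        iset_eq (Mod (E' phi M)) (Mod (E' phi M')))).
Proof.
  transitivity (forall phi M,
    iset_eq (Mod (E' phi M)) (iset_union (Mod phi) (lit_class phi M))).
  - split; intros H phi M; apply equiv_Efbm, H.
  - split; [apply postulates_of_Mod_eq | apply Mod_eq_of_postulates].
Qed.
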